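(* Let $\sigma$ be a partial action of a locally compact Hausdorff group $G$ on a locally compact Hausdorff space $X$, and let $\sigma^e$ be its enveloping action on the enveloping space $X^e$. The following are equivalent: (1) $X^e$ is locally compact Hausdorff and $\sigma^e$ is a proper action; (2) for every net $\{(t_i,x_i)\}_{i\in I}\subseteq\Gamma_\sigma$ such that $\{(\sigma_{t_i}(x_i),x_i)\}_{i\in I}$ converges to a point of $X\times X$, there is a subnet of $\{(t_i,x_i)\}_{i\in I}$ converging to a point of $\Gamma_\sigma$; (3) the map $F_\sigma\colon\Gamma_\sigma\to X\times X$, $F_\sigma(t,x)=(\sigma_t(x),x)$, is proper.
   Context: A topological partial action $\sigma=(\{X_t\},\{\sigma_t\})$: open $X_t\subseteq X$, homeomorphisms $\sigma_t\colon X_{t^{-1}}\to X_t$, $X_e=X$, $\sigma_e=\mathrm{id}$, $\sigma_s(X_{s^{-1}}\cap X_t)=X_s\cap X_{st}$, $\sigma_s\sigma_t=\sigma_{st}$ on $X_{t^{-1}}\cap X_{t^{-1}s^{-1}}$, with $\Gamma_\sigma:=\{(t,x)\in G\times X:x\in X_{t^{-1}}\}$ open and $(t,x)\mapsto\sigma_t(x)$ continuous on it. The enveloping action $\sigma^e$ is (up to isomorphism) a global action of $G$ on a topological space $X^e$ with $X$ open in $X^e$, $X_t=X\cap\sigma^e_t(X)$, $\sigma_t=\sigma^e_t$ on $X_{t^{-1}}$, and $X^e=\bigcup_t\sigma^e_t(X)$. A global action $\sigma^e$ is proper if $(t,x)\mapsto(\sigma^e_t(x),x)$, $G\times X^e\to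 X^e\times X^e$, is proper (preimages of compact sets compact). *)

From HB Require Import structures.
From mathcomp Require Import all_boot all_order all_algebra.
From mathcomp Require Import all_classical all_reals all_analysis.
Set Implicit Arguments. Unset Strict Implicit. Unset Printing Implicit Defensive.
Local Open Scope classical_set_scope.

Record topgroup := TopGroup {
  tg_carrier :> topologicalType;
  tg_mul : tg_carrier -> tg_carrier -> tg_carrier;
  tg_inv : tg_carrier -> tg_carrier;
  tg_one : tg_carrier;
  tg_mulA : forall a b c, tg_mul a (tg_mul b c) = tg_mul (tg_mul a b) c;
  tg_mul1g : forall a, tg_mul tg_one a = a;
  tg_mulg1 : forall a, tg_mul a tg_one = a;
  tg_mulVg : forall a, tg_mul (tg_inv a) a = tg_one;
  tg_mulgV : forall a, tg_mul a (tg_inv a) = tg_one;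
  tg_mul_cont : continuous (fun p : tg_carrier * tg_carrier => tg_mul p.1 p.2);
  tg_inv_cont : continuous tg_inv
}.

Arguments tg_mul {_}. Arguments tg_inv {_}. Arguments tg_one {_}.

(* Topological partial action sigma = ({X_t}, {sigma_t}) of G on X:
   pa_dom t = X_t, pa_act t = sigma_t (only meaningful on X_{t^-1}). *)
Record partial_action (G : topgroup) (X : topologicalType) := PartialAction {
  pa_dom : G -> set X;
  pa_act : G -> X -> X;
  pa_dom_open : forall t, open (pa_dom t);
  pa_dom_one : pa_dom tg_one = setT;
  pa_act_one : forall x, pa_act tg_one x = x;
  pa_act_maps : forall t x, pa_dom (tg_inv t) x -> pa_dom t (pa_act t x);
  pa_act_cont : forall t, {within pa_dom (tg_inv t), continuous (pa_act t)};
  pa_act_homeo : forall t, exists g : X -> X,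
      [/\ forall y, pa_dom t y -> pa_dom (tg_inv t) (g y),
          forall x, pa_dom (tg_inv t) x -> g (pa_act t x) = x,
          forall y, pa_dom t y -> pa_act t (g y) = y &
          {within pa_dom t, continuous g}];
  pa_act_inter : forall s t,
      pa_act s @` (pa_dom (tg_inv s) `&` pa_dom t) = pa_dom s `&` pa_dom (tg_mul s t);
  pa_act_comp : forall s t x, pa_dom (tg_inv t) x ->
      pa_dom (tg_mul (tg_inv t) (tg_inv s)) x ->
      pa_act s (pa_act t x) = pa_act (tg_mul s t) x;
  pa_Gamma_open : open [set p : G * X | pa_dom (tg_inv p.1) p.2];
  pa_Gamma_cont : {within [set p : G * X | pa_dom (tg_inv p.1) p.2],
                    continuous (fun p : G * X => pa_act p.1 p.2)}
}.

Arguments pa_dom {_ _}. Arguments pa_act {_ _}.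

Definition Gamma {G : topgroup} {X : topologicalType} (s : partial_action G X)
  : set (G * X) := [set p | pa_dom s (tg_inv p.1) p.2].

Definition Fsigma {G : topgroup} {X : topologicalType} (s : partial_action G X)
  (p : G * X) : X * X := (pa_act s p.1 p.2, p.2).

Definition global_action {G : topgroup} {Y : topologicalType} (th : G -> Y -> Y) :=
  [/\ forall y, th tg_one y = y,
      forall s t y, th s (th t y) = th (tg_mul s t) y &
      continuous (fun p : G * Y => th p.1 p.2)].

(* Proper map: preimages of compact sets are compact.  For a map defined on a
   subspace D, compactness of a subset of D is compactness in the ambient space. *)
Definition proper_on {A B : topologicalType} (D : set A) (f : A -> B) :=
  forall K : set B, compact K -> compact (D `&` f @^-1` K).

Definition proper_action {G : topgroup} {Y : topologicalType} (th : G -> Y -> Y) :=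
  proper_on setT (fun p : G * Y => (th p.1 p.2, p.2)).

Definition lc_hausdorff (T : topologicalType) :=
  locally_compact [set: T] /\ hausdorff_space T.

(* (Y, iota, th) is (a model of) the enveloping action of s: th is a continuous
   global action on Y, iota : X -> Y is an open embedding (identifying X with
   an open subset of Y), X_t = X cap th_t(X), sigma_t = th_t on X_{t^-1},
   and Y = U_t th_t(X). *)
Definition enveloping_action {G : topgroup} {X Y : topologicalType}
  (s : partial_action G X) (iota : X -> Y) (th : G -> Y -> Y) :=
  [/\ global_action th,
      [/\ continuous iota, injective iota &
          forall U : set X, open U -> open (iota @` U)],
      forall t, iota @` pa_dom s t = range iota `&` th t @` range iota,
      forall t x, pa_dom s (tg_inv t) x -> th t (iota x) = iota (pa_act s t x) &
      [set: Y] = \bigcup_(t in [set: G]) th t @` range iota].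

Record directed_set := DirectedSet {
  dir_carrier :> Type;
  dir_le : dir_carrier -> dir_carrier -> Prop;
  dir_refl : forall i, dir_le i i;
  dir_trans : forall i j k, dir_le i j -> dir_le j k -> dir_le i k;
  dir_inhabited : inhabited dir_carrier;
  dir_upper : forall i j, exists k, dir_le i k /\ dir_le j k
}.

Arguments dir_le {_}.

Definition net_converges {T : topologicalType} {I : directed_set}
  (x : I -> T) (p : T) :=
  forall U, nbhs p U -> exists i0, forall i, dir_le i0 i -> U (x i).

(* There is a subnet (in the sense of Willard) of x converging to a point of A. *)
Definition has_subnet_converging_in {T : topologicalType} {I : directed_set}
  (x : I -> T) (A : set T) :=
  exists (J : directed_set) (h : J -> I),
    (forall i, exists j0, forall j, dir_le j0 j -> dir_le i (h j)) /\
    exists2 p, A p & net_converges (x \o h) p.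

From HB Require Import structures.
From mathcomp Require Import all_boot all_order all_algebra.
From mathcomp Require Import all_classical all_reals all_analysis.
Local Open Scope classical_set_scope.

(* (2) <-> (3): a set is compact iff every net in it has a subnet converging
   in it, and a subnet of (t_i, x_i) converging to p in Gamma_sigma has
   F_sigma(p) as the limit of its images, by continuity of F_sigma and
   uniqueness of limits in the Hausdorff space X x X.
   (1) -> (3): (t, x) |-> (t, x) maps Gamma_sigma /\ F_sigma^-1(K) injectively
   and openly into G x X^e, onto the preimage of K under the graph map
   (t, y) |-> (sigma^e_t y, y).
   (3) -> (1): every point of X^e is some sigma^e_a(x).  If sigma^e_a(x) and
   sigma^e_b(y) cannot be separated, then (x, y) lies in the closure of
   F_sigma({t} x X_{t^-1}), t = a^-1 b, which properness makes closed; so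
   x = sigma_t(y) and the two points coincide.  Translates of compact
   neighbourhoods in X are compact neighbourhoods in X^e, and above
   sigma^e_a(K) x sigma^e_b(K') the preimage under the graph map lies in the
   image of F_sigma^-1(K x K') under (t, x) |-> (a t b^-1, sigma^e_b x), so
   properness of sigma^e reduces to that of F_sigma. *)

Lemma nbhs_setX {A B : topologicalType} {a : A} {b : B} {P : set A} {Q : set B} :
  nbhs a P -> nbhs b Q -> nbhs (a, b) (P `*` Q).
Proof. by move=> nP nQ; exists (P, Q). Qed.

Lemma hausdorff_prod {A B : topologicalType} :
  hausdorff_space A -> hausdorff_space B -> hausdorff_space (A * B)%type.
Proof.
move=> hA hB [a1 b1] [a2 b2] cl; congr pair.
- apply: hA => U V nU nV.
  have [[z _] [[/= Uz _] [/= Vz _]]] := cl (U `*` setT) (V `*` setT)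
    (nbhs_setX nU filterT) (nbhs_setX nV filterT).
  by exists z.
- apply: hB => U V nU nV.
  have [[_ z] [[_ /= Uz] [_ /= Vz]]] := cl (setT `*` U) (setT `*` V)
    (nbhs_setX filterT nU) (nbhs_setX filterT nV).
  by exists z.
Qed.

Lemma pair_continuous {A B C : topologicalType} {f : A -> B} {g : A -> C} {x : A} :
  {for x, continuous f} -> {for x, continuous g} ->
  {for x, continuous (fun a => (f a, g a))}.
Proof. exact: cvg_pair. Qed.

Lemma fst_continuous {A B : topologicalType} : continuous (@fst A B).
Proof. by move=> p; apply: cvg_fst. Qed.

Lemma snd_continuous {A B : topologicalType} : continuous (@snd A B).
Proof. by move=> p; apply: cvg_snd. Qed.

Lemma lc_compact_nbhs {T : topologicalType} :
  lc_hausdorff T -> forall x : T, exists2 K, nbhs x K & compact K.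
Proof. by case=> lcT _ x; have [K + [cK _]] := lcT x I; rewrite withinET; exists K. Qed.

Lemma within_proper_filter {T : Type} (F : set_system T) (S : set T) :
  ProperFilter F -> (forall W, F W -> W `&` S !=set0) -> ProperFilter (within S F).
Proof.
move=> PF meetS; apply: Build_ProperFilter => /meetS [x [Sx_false Sx]].
exact: Sx_false.
Qed.

Section ProperMaps.
Context {A B : topologicalType}.

Lemma proper_closure_image {D C : set A} {f : A -> B} {b : B} :
  hausdorff_space B -> proper_on D f -> {in D, continuous f} -> closed C ->
  (exists2 K, nbhs b K & compact K) ->
  closure (f @` (D `&` C)) b -> (f @` (D `&` C)) b.
Proof.
move=> hB pf cf clC [K nK cK] clb.
pose S := D `&` f @^-1` K `&` C.
have cfS : compact (f @` S).
  apply: continuous_compact (compact_closedI (pf K cK) clC).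
  by apply: continuous_in_subspaceT => a /set_mem [[Da _] _]; exact/cf/mem_set.
have : closure (f @` S) b.
  move=> W nW; have [_ [[a [Da Ca] <-] [Wfa Kfa]]] := clb _ (filterI nW nK).
  by exists (f a); split => //; exists a.
by rewrite -(closure_id _).1; [case=> a [[Da _] Ca] <-; exists a | exact: compact_closed].
Qed.

Lemma compact_preimage_local (f : A -> B) (L : set B) :
  compact L -> closed (f @^-1` L) ->
  (forall b, L b -> exists2 N, nbhs b N & exists2 Q, compact Q & f @^-1` N `<=` Q) ->
  compact (f @^-1` L).
Proof.
move=> cL clP loc F PF FP.
have [b [Lb clb]] := cL (f @ F) (fmap_proper_filter f PF) FP.
have [N nN [Q cQ NQ]] := loc b Lb.
have PF' : ProperFilter (within (f @^-1` N) F).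
  apply: within_proper_filter => W FW.
  have [_ [[a Wa <-] Nfa]] := clb (f @` W) N (filterS (@preimage_image _ _ f W) FW) nN.
  by exists a.
have FQP : within (f @^-1` N) F (Q `&` f @^-1` L).
  by apply: filterS FP => a La /NQ Qa.
have [c [[Qc Pc] clc]] := compact_closedI cQ clP PF' FQP.
exists c; split => // W U FW nU; apply: clc nU.
by apply: filterS FW => a.
Qed.

Lemma compact_of_open_injective_image (j : A -> B) (C : set A) :
  injective j -> (forall a U, nbhs a U -> nbhs (j a) (j @` U)) ->
  compact (j @` C) -> compact C.
Proof.
move=> ij nj cj F PF FC.
have [_ [[c Cc <-] clc]] := cj (j @ F) (fmap_proper_filter j PF)
  (filterS (@preimage_image _ _ j C) FC).
exists c; split => // W U FW nU.
have [_ [[w Ww <-] [u Uu /ij eu]]] :=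
  clc _ _ (filterS (@preimage_image _ _ j W) FW) (nj _ _ nU).
by exists w; split => //; rewrite -eu.
Qed.

End ProperMaps.

Definition net_filter {I : directed_set} {T : Type} (x : I -> T) : set_system T :=
  [set A | exists i0, forall i, dir_le i0 i -> A (x i)].

Lemma net_filter_proper {I : directed_set} {T : Type} (x : I -> T) :
  ProperFilter (net_filter x).
Proof.
apply: Build_ProperFilter.
  by case=> i0 x0; have [k [i0k _]] := dir_upper i0 i0; exact: x0 k i0k.
constructor.
- by case: (dir_inhabited I) => i; exists i.
- move=> P Q [i xP] [j xQ]; have [k [ik jk]] := dir_upper i j.
  by exists k => l kl; split; [apply: xP | apply: xQ]; exact: dir_trans kl.
- by move=> P Q PQ [i xP]; exists i => j /xP /PQ.
Qed.

Definition cofinal {I J : directed_set} (h : J -> I) :=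
  forall i, exists j0, forall j, dir_le j0 j -> dir_le i (h j).

Lemma cofinal_comp {I J K : directed_set} (h1 : J -> I) (h2 : K -> J) :
  cofinal h1 -> cofinal h2 -> cofinal (h1 \o h2).
Proof.
move=> c1 c2 i; have [j0 hj] := c1 i; have [k0 hk] := c2 j0.
by exists k0 => k /hk /hj.
Qed.

Section NetConvergence.
Context {T : topologicalType} {I : directed_set}.
Implicit Types (x : I -> T) (p : T).

Lemma net_converges_subnet {J : directed_set} {x} {h : J -> I} {p} :
  cofinal h -> net_converges x p -> net_converges (x \o h) p.
Proof.
move=> ch cx U /cx [i0 hi]; have [j0 hj] := ch i0.
by exists j0 => j /hj /hi.
Qed.

Lemma net_converges_continuous {U : topologicalType} {x} {f : T -> U} {p} :
  {for p, continuous f} -> net_converges x p -> net_converges (f \o x) (f p).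
Proof. by move=> cf cx W /cf /cx. Qed.

Lemma net_converges_unique {x} {p q} :
  hausdorff_space T -> net_converges x p -> net_converges x q -> p = q.
Proof.
move=> hT cp cq; apply: hT => U V /cp [i hi] /cq [j hj].
by have [k [ik jk]] := dir_upper i j; exists (x k); split; [apply: hi | apply: hj].
Qed.

End NetConvergence.

Section SubnetAtCluster.
Context {T : topologicalType} {I : directed_set} {p : T}.

Definition nbhs_index := {iU : I * set T | nbhs p iU.2}.

Definition nbhs_index_le (a b : nbhs_index) :=
  dir_le (sval a).1 (sval b).1 /\ (sval b).2 `<=` (sval a).2.

Lemma nbhs_index_le_refl a : nbhs_index_le a a.
Proof. by split; [apply: dir_refl |]. Qed.

Lemma nbhs_index_le_trans a b c :
  nbhs_index_le a b -> nbhs_index_le b c -> nbhs_index_le a c.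
Proof. by case=> ab1 ab2 [bc1 bc2]; split; [exact: dir_trans bc1 | move=> z /bc2 /ab2]. Qed.

Definition nbhs_index_at (i : I) : nbhs_index :=
  @exist _ (fun iU : I * set T => nbhs p iU.2) (i, setT) filterT.

Lemma nbhs_index_inhabited : inhabited nbhs_index.
Proof. by case: (dir_inhabited I) => i; constructor; exact: nbhs_index_at i. Qed.

Lemma nbhs_index_upper a b : exists c, nbhs_index_le a c /\ nbhs_index_le b c.
Proof.
case: a b => [[i U] nU] [[j V] nV]; have [k [ik jk]] := dir_upper i j.
by exists (exist _ (k, U `&` V) (filterI nU nV)); split; split => //= z [].
Qed.

Definition nbhs_directed := DirectedSet nbhs_index_le_refl nbhs_index_le_trans
  nbhs_index_inhabited nbhs_index_upper.

Lemma cluster_subnet {x : I -> T} : cluster (net_filter x) p ->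
  exists (J : directed_set) (h : J -> I), cofinal h /\ net_converges (x \o h) p.
Proof.
move=> clp.
have pick (a : nbhs_directed) : exists k, dir_le (sval a).1 k /\ (sval a).2 (x k).
  case: a => [[i U] /= nU].
  have [_ [[k ik <-] Uxk]] := clp [set x k | k in dir_le i] U
    (ex_intro _ i (fun k ik => ex_intro2 _ _ k ik erefl)) nU.
  by exists k.
have [h hh] := choice pick.
exists nbhs_directed, h; split.
  by move=> i; exists (nbhs_index_at i) => a [/= ia _]; exact: dir_trans ia (hh a).1.
move=> U nU; case: (dir_inhabited I) => i0.
by exists (exist _ (i0, U) nU) => a [_ /= aU]; exact/aU/(hh a).2.
Qed.

End SubnetAtCluster.

Lemma compact_subnet {T : topologicalType} {I : directed_set} {C : set T} {x : I -> T} :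
  compact C -> net_filter x C -> has_subnet_converging_in x C.
Proof.
move=> cC xC; have [p [Cp clp]] := cC _ (net_filter_proper x) xC.
have [J [h [ch cxh]]] := cluster_subnet clp.
by exists J, h; split => //; exists p.
Qed.

Section NetOfFilter.
Context {T : Type} {F : set_system T} {PF : ProperFilter F} {A : set T}.
Hypothesis FA : F A.

Definition filter_index := {Va : set T * T | F Va.1 /\ Va.1 Va.2 /\ A Va.2}.

Definition filter_index_le (a b : filter_index) := (sval b).1 `<=` (sval a).1.

Lemma filter_index_le_refl a : filter_index_le a a.
Proof. by []. Qed.

Lemma filter_index_le_trans a b c :
  filter_index_le a b -> filter_index_le b c -> filter_index_le a c.
Proof. by move=> ab bc z /bc /ab. Qed.

Lemma filter_index_at {W : set T} : F W -> exists a : filter_index, (sval a).1 = W `&` A.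
Proof.
move=> FW; have FWA : F (W `&` A) by exact: filterI.
by have [w WAw] := filter_ex FWA; exists (exist _ (W `&` A, w) (conj FWA (conj WAw WAw.2))).
Qed.

Lemma filter_index_inhabited : inhabited filter_index.
Proof. by have [a _] := filter_index_at (@filterT _ F _); constructor. Qed.

Lemma filter_index_upper a b : exists c, filter_index_le a c /\ filter_index_le b c.
Proof.
have [c ec] := filter_index_at (filterI (svalP a).1 (svalP b).1).
by exists c; rewrite /filter_index_le ec /=; split => z [[]].
Qed.

Definition filter_directed := DirectedSet filter_index_le_refl
  filter_index_le_trans filter_index_inhabited filter_index_upper.

Lemma filter_net : exists (I : directed_set) (x : I -> T),
  (forall i, A (x i)) /\ F `<=` net_filter x.
Proof.
exists filter_directed, (fun a => (sval a).2); split => [a | W FW].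
  exact: (svalP a).2.2.
have [a ea] := filter_index_at FW.
by exists a => b ab; have /ab := (svalP b).2.1; rewrite ea => -[].
Qed.

End NetOfFilter.

Lemma subnet_cluster {T : topologicalType} {I J : directed_set} (x : I -> T)
    (h : J -> I) p :
  cofinal h -> net_converges (x \o h) p -> cluster (net_filter x) p.
Proof.
move=> ch cxh W U [i0 xW] /cxh [j1 hU]; have [j0 hj] := ch i0.
have [j [j0j j1j]] := dir_upper j0 j1.
by exists (x (h j)); split; [exact/xW/hj | exact: hU].
Qed.

Lemma subnet_compact {T : topologicalType} (A : set T) :
  (forall (I : directed_set) (x : I -> T), (forall i, A (x i)) ->
     has_subnet_converging_in x A) -> compact A.
Proof.
move=> subA F PF FA; have [I [x [Ax Fx]]] := filter_net FA.
have [J [h [ch [q Aq cxh]]]] := subA I x Ax.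
exists q; split => // W U FW; exact: subnet_cluster ch cxh W U (Fx W FW).
Qed.

Section TopGroup.
Context {G : topgroup}.
Implicit Types a b : G.

Lemma mulKVg a b : tg_mul a (tg_mul (tg_inv a) b) = b.
Proof. by rewrite tg_mulA tg_mulgV tg_mul1g. Qed.

Lemma mulgK a b : tg_mul (tg_mul b a) (tg_inv a) = b.
Proof. by rewrite -tg_mulA tg_mulgV tg_mulg1. Qed.

Lemma mulg_continuous_l a : continuous (tg_mul a).
Proof.
move=> b; exact: continuous_comp
  (pair_continuous (@cst_continuous _ _ a b) cvg_id) (@tg_mul_cont G (a, b)).
Qed.

Lemma mulg_continuous_r a : continuous (tg_mul^~ a).
Proof.
move=> b; exact: continuous_comp
  (pair_continuous cvg_id (@cst_continuous _ _ a b)) (@tg_mul_cont G (b, a)).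
Qed.

End TopGroup.

Section PartialAction.
Context {G : topgroup} {X : topologicalType} (s : partial_action G X).

Lemma Fsigma_continuous : {in Gamma s, continuous (Fsigma s)}.
Proof.
move=> p Gp; have := @pa_Gamma_cont _ _ s.
rewrite continuous_open_subspace; last exact: pa_Gamma_open.
by move=> /(_ p Gp) cact; exact: pair_continuous cact (snd_continuous p).
Qed.

End PartialAction.

Definition Fsigma_subnet_property {G : topgroup} {X : topologicalType}
    (s : partial_action G X) :=
  forall (I : directed_set) (net : I -> G * X), (forall i, Gamma s (net i)) ->
    (exists q : X * X, net_converges (Fsigma s \o net) q) ->
    has_subnet_converging_in net (Gamma s).

Section FsigmaProperSubnet.
Context {G : topgroup} {X : topologicalType} (s : partial_action G X).

Lemma Fsigma_proper_subnet : lc_hausdorff X ->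
  proper_on (Gamma s) (Fsigma s) -> Fsigma_subnet_property s.
Proof.
move=> lcX pr I net Gnet [[q1 q2] cq].
have [K1 nK1 cK1] := lc_compact_nbhs lcX q1.
have [K2 nK2 cK2] := lc_compact_nbhs lcX q2.
have [i0 Kq] := cq _ (nbhs_setX nK1 nK2).
have [J [h [ch [p [Gp _] cp]]]] := compact_subnet (pr _ (compact_setX cK1 cK2))
  (ex_intro _ i0 (fun i i0i => conj (Gnet i) (Kq i i0i))).
by exists J, h; split => //; exists p.
Qed.

Lemma subnet_Fsigma_proper : hausdorff_space X ->
  Fsigma_subnet_property s -> proper_on (Gamma s) (Fsigma s).
Proof.
move=> hX sub K cK; apply: subnet_compact => I x Kx; case: (dir_inhabited I) => i0.
have [J1 [h1 [ch1 [q Kq cq]]]] := compact_subnet (x := Fsigma s \o x) cK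
  (ex_intro _ i0 (fun i _ => (Kx i).2)).
have [J2 [h2 [ch2 [p Gp cp]]]] :=
  sub J1 (x \o h1) (fun j => (Kx (h1 j)).1) (ex_intro _ q cq).
exists J2, (h1 \o h2); split; first exact: cofinal_comp.
exists p => //; split => //; rewrite /preimage /=.
suff -> : Fsigma s p = q by [].
have cFp := net_converges_continuous (Fsigma_continuous s _ (mem_set Gp)) cp.
exact: net_converges_unique (hausdorff_prod hX hX) cFp (net_converges_subnet ch2 cq).
Qed.

End FsigmaProperSubnet.

Section EnvelopingAction.
Context {G : topgroup} {X Y : topologicalType} {s : partial_action G X}
  {iota : X -> Y} {th : G -> Y -> Y}.
Hypothesis env : enveloping_action s iota th.

Lemma th_comp a b y : th a (th b y) = th (tg_mul a b) y.
Proof. by case: env => -[]. Qed.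

Lemma th_jcontinuous : continuous (fun p : G * Y => th p.1 p.2).
Proof. by case: env => -[]. Qed.

Lemma th_inv a y : th (tg_inv a) (th a y) = y.
Proof. by case: env => -[th1 _ _] *; rewrite th_comp tg_mulVg th1. Qed.

Lemma th_invK a y : th a (th (tg_inv a) y) = y.
Proof. by case: env => -[th1 _ _] *; rewrite th_comp tg_mulgV th1. Qed.

Lemma th_continuous a : continuous (th a).
Proof.
move=> y; exact: continuous_comp
  (pair_continuous (@cst_continuous _ _ a y) cvg_id) (th_jcontinuous (a, y)).
Qed.

Lemma th_nbhs (a : G) {y : Y} {A : set Y} : nbhs y A -> nbhs (th a y) (th a @` A).
Proof.
move=> nA; have : nbhs (th a y) (th (tg_inv a) @^-1` A).
  by apply: th_continuous; rewrite th_inv.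
by apply: filterS => z Az; exists (th (tg_inv a) z); rewrite ?th_invK.
Qed.

Lemma iota_continuous : continuous iota.
Proof. by case: env => _ []. Qed.

Lemma iota_inj : injective iota.
Proof. by case: env => _ []. Qed.

Lemma iota_nbhs {x : X} {A : set X} : nbhs x A -> nbhs (iota x) (iota @` A).
Proof.
case: env => _ [_ _ iota_open] _ _ _.
rewrite nbhsE => -[B [oB Bx] BA]; apply: filterS (image_subset iota BA) _.
exact: open_nbhs_nbhs (conj (iota_open _ oB) (ex_intro2 _ _ x Bx erefl)).
Qed.

Lemma th_iota t x : pa_dom s (tg_inv t) x -> th t (iota x) = iota (pa_act s t x).
Proof. by case: env => _ _ _ + _; apply. Qed.

Lemma th_iota_eq {t : G} {x x' : X} : th t (iota x) = iota x' ->
  pa_dom s (tg_inv t) x /\ pa_act s t x = x'.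
Proof.
move=> e; have dx : pa_dom s (tg_inv t) x.
  case: env => _ _ dom_range _ _.
  have : (range iota `&` th (tg_inv t) @` range iota) (iota x).
    by split; [exists x | exists (iota x'); [exists x' | rewrite -e th_inv]].
  by rewrite -dom_range => -[z dz /iota_inj <-].
by split => //; apply: iota_inj; rewrite -th_iota.
Qed.

Lemma th_iota_cover y : exists a x, y = th a (iota x).
Proof.
case: env => _ _ _ _ cover.
have : [set: Y] y by [].
by rewrite cover => -[t _ [_ [x _ <-] <-]]; exists t, x.
Qed.

Lemma th_graph_preimage_sub (a b : G) (Ka Kb : set X) :
  (fun p : G * Y => (th p.1 p.2, p.2)) @^-1`
      ((th a @` (iota @` Ka)) `*` (th b @` (iota @` Kb)))
  `<=` (fun p : G * X => (tg_mul (tg_mul a p.1) (tg_inv b), th b (iota p.2))) @`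
      (Gamma s `&` Fsigma s @^-1` (Ka `*` Kb)).
Proof.
move=> [t y] [/= [_ [x2 Kx2 <-] e2] [_ [x1 Kx1 <-] e1]].
pose t' := tg_mul (tg_inv a) (tg_mul t b).
have [dx1 ex1] : pa_dom s (tg_inv t') x1 /\ pa_act s t' x1 = x2.
  by apply: th_iota_eq; rewrite /t' -!th_comp e1 -e2 th_inv.
exists (t', x1); first by split => //; rewrite /preimage /Fsigma /= ex1.
by rewrite /t' /= mulKVg mulgK e1.
Qed.

Lemma proper_action_Fsigma_proper :
  proper_action th -> proper_on (Gamma s) (Fsigma s).
Proof.
move=> pr K cK.
pose iota2 (z : X * X) := (iota z.1, iota z.2).
have cK2 : compact (iota2 @` K).
  apply: continuous_compact cK; apply: continuous_subspaceT => z.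
  exact: pair_continuous (continuous_comp (fst_continuous z) (iota_continuous _))
    (continuous_comp (snd_continuous z) (iota_continuous _)).
pose j (p : G * X) := (p.1, iota p.2).
have graphE : setT `&` (fun p : G * Y => (th p.1 p.2, p.2)) @^-1` (iota2 @` K) =
    j @` (Gamma s `&` Fsigma s @^-1` K).
  rewrite eqEsubset; split.
    move=> [t y] [_ [[x' x] Kx [e1 e2]]]; subst y.
    have [dx ex] := th_iota_eq (esym e1).
    by exists (t, x) => //; split => //; rewrite /preimage /Fsigma /= ex.
  move=> _ [[t x] [dx Kx] <-]; split => //.
  by exists (Fsigma s (t, x)) => //; rewrite /iota2 /Fsigma /= th_iota.
apply: (@compact_of_open_injective_image _ _ j); last by rewrite -graphE; exact: pr.
  by move=> [t x] [t' x'] [-> /iota_inj ->].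
move=> [t x] U [[P Q] /= [nP nQ] PQU].
apply: filterS (nbhs_setX nP (iota_nbhs nQ)) => -[t' _] [/= Pt' [x' Qx' <-]].
by exists (t', x') => //; exact: PQU.
Qed.

Section FromProperFsigma.
Hypotheses (lcG : lc_hausdorff G) (lcX : lc_hausdorff X)
  (pr : proper_on (Gamma s) (Fsigma s)).

Lemma enveloping_hausdorff : hausdorff_space Y.
Proof.
move=> p q; have [a [x ->]] := th_iota_cover p; have [b [y ->]] := th_iota_cover q.
move=> clpq.
pose t := tg_mul (tg_inv a) b.
have cl : closure (Fsigma s @` (Gamma s `&` [set z | z.1 = t])) (x, y).
  move=> W [[U V] /= [nU nV] UVW].
  have [z [[_ [u Uu <-] eu] [_ [v Vv <-] ev]]] :=
    clpq _ _ (th_nbhs a (iota_nbhs nU)) (th_nbhs b (iota_nbhs nV)).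
  have [dv act_v] : pa_dom s (tg_inv t) v /\ pa_act s t v = u.
    by apply: th_iota_eq; rewrite /t -th_comp ev -eu th_inv.
  exists (Fsigma s (t, v)); split; first by exists (t, v).
  by apply: UVW; rewrite /Fsigma /= act_v.
have closed_fiber : closed [set z : G * X | z.1 = t].
  apply: (@preimage_closed _ _ fst [set t]); first by move=> z _; exact: fst_continuous.
  exact/accessible_closed_set1/hausdorff_accessible/lcG.2.
have [Kx nKx cKx] := lc_compact_nbhs lcX x; have [Ky nKy cKy] := lc_compact_nbhs lcX y.
have [[t' x'] [dx' /= et'] [<- <-]] := proper_closure_image (hausdorff_prod lcX.2 lcX.2)
  pr (Fsigma_continuous s) closed_fiber
  (ex_intro2 _ _ _ (nbhs_setX nKx nKy) (compact_setX cKx cKy)) cl.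
by subst t'; rewrite -th_iota // th_comp /t mulKVg.
Qed.

Lemma enveloping_locally_compact : locally_compact [set: Y].
Proof.
move=> y _; rewrite withinET.
have [a [x ->]] := th_iota_cover y; have [K nK cK] := lc_compact_nbhs lcX x.
have cK' : compact (th a @` (iota @` K)).
  apply: continuous_compact; first exact/continuous_subspaceT/th_continuous.
  by apply: continuous_compact cK; exact/continuous_subspaceT/iota_continuous.
exists (th a @` (iota @` K)); first exact: th_nbhs (iota_nbhs nK).
by split => //; exact: compact_closed enveloping_hausdorff cK'.
Qed.

Lemma enveloping_proper_action : proper_action th.
Proof.
move=> L cL; rewrite setTI.
have cgraph : continuous (fun p : G * Y => (th p.1 p.2, p.2)).
  by move=> p; have := pair_continuous (th_jcontinuous p) (snd_continuous p).
have hY2 := hausdorff_prod enveloping_hausdorff enveloping_hausdorff.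
apply: compact_preimage_local => //.
  by apply: preimage_closed; [move=> p _; exact: cgraph | exact: compact_closed cL].
move=> [u w] _.
have [a [x ->]] := th_iota_cover u; have [b [y ->]] := th_iota_cover w.
have [Kx nKx cKx] := lc_compact_nbhs lcX x; have [Ky nKy cKy] := lc_compact_nbhs lcX y.
exists ((th a @` (iota @` Kx)) `*` (th b @` (iota @` Ky))).
  exact: nbhs_setX (th_nbhs a (iota_nbhs nKx)) (th_nbhs b (iota_nbhs nKy)).
eexists; last exact: th_graph_preimage_sub.
apply: continuous_compact (pr _ (compact_setX cKx cKy)).
apply: continuous_subspaceT => p.
have := pair_continuous
  (continuous_comp (fst_continuous p)
    (continuous_comp (mulg_continuous_l a _) (mulg_continuous_r (tg_inv b) _)))
  (continuous_comp (snd_continuous p)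
    (continuous_comp (iota_continuous _) (th_continuous b _))).
by [].
Qed.

End FromProperFsigma.
End EnvelopingAction.

Theorem proposition1p10 (G : topgroup) (X : topologicalType)
  (s : partial_action G X) (Y : topologicalType) (iota : X -> Y)
  (th : G -> Y -> Y) :
  lc_hausdorff G -> lc_hausdorff X -> enveloping_action s iota th ->
  let cond1 := lc_hausdorff Y /\ proper_action th in
  let cond2 := forall (I : directed_set) (net : I -> G * X),
      (forall i, Gamma s (net i)) ->
      (exists q : X * X, net_converges (Fsigma s \o net) q) ->
      has_subnet_converging_in net (Gamma s) in
  let cond3 := proper_on (Gamma s) (Fsigma s) in
  (cond1 <-> cond2) /\ (cond2 <-> cond3).
Proof.
move=> lcG lcX env cond1 cond2 cond3.
have c23 : cond2 <-> cond3.
  split; [exact: subnet_Fsigma_proper lcX.2 | exact: Fsigma_proper_subnet].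
have c31 : cond3 -> cond1.
  move=> pr; split; last exact: enveloping_proper_action env lcG lcX pr.
  by split; [exact: enveloping_locally_compact env lcG lcX pr
            | exact: enveloping_hausdorff env lcG lcX pr].
have c13 : cond1 -> cond3 by case=> _; exact: proper_action_Fsigma_proper env.
by split => //; split => [/c13 /c23.2 | /c23.1 /c31].
Qed.
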